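(* Let $\mathcal{H}=(\mathcal{T},\mathsf{SO})$ be a history and let $\mathcal{G}=(\mathcal{V},\mathcal{E},(\mathcal{C}^{\mathsf{WW}},\mathcal{C}^{\mathsf{WR}}))$ be the hyper-polygraph of $\mathcal{H}$. Then $\mathcal{H}$ satisfies Serializability if and only if $\mathcal{H}$ satisfies $\textsc{Int}$ and there exists an acyclic directed labeled graph that is compatible with $\mathcal{G}$.
   Context: Fix a set of keys $\mathsf{Key}$ and a set of values $\mathsf{Val}$. An operation is a read $\mathsf{R}(x,v)$ or a write $\mathsf{W}(x,v)$ with $x\in\mathsf{Key}$, $v\in\mathsf{Val}$ (each operation carries a unique identifier). A transaction is a pair $(O,\mathsf{po})$ where $O$ is a finite non-empty set of operations and $\mathsf{po}$ (program order) is a strict total order on $O$. A history is a pair $\mathcal{H}=(\mathcal{T},\mathsf{SO})$ where $\mathcal{T}$ is a set of transactions with pairwise disjoint operation sets and $\mathsf{SO}\subseteq\mathcal{T}\times\mathcal{T}$ (session order) is a union of strict total orders on pairwise disjoint subsets of $\mathcal{T}$. Every history contains a special transaction $T_\bot$ that writes the initial value of every key and precedes every other transaction in $\mathsf{SO}$. Notation: $T\vdash \mathsf{W}(x,v)$ means $T$ writes to $x$ and $v$ is the value of its $\mathsf{po}$-last write to $x$; $T\vdash\mathsf{R}(x,v)$ means $T$ reads $x$ before (in $\mathsf{po}$) any write of $T$ to $x$, and $v$ is the value returned by the first such read. $\mathsf{WriteTx}_x=\{T\mid T\vdash\mathsf{W}(x,\_)\}$, where $\_$ denotes an existentially quantified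 value. $\mathcal{H}$ satisfies $\textsc{Int}$ (internal consistency) if in every transaction, every read of a key $x$ that is $\mathsf{po}$-preceded by some operation on $x$ returns the value of the $\mathsf{po}$-latest preceding operation on $x$ (the value written, if a write; the value returned, if a read). $\mathcal{H}$ satisfies Serializability if $\mathcal{H}\models\textsc{Int}$ and there is a strict total order $\prec$ on $\mathcal{T}$ containing $\mathsf{SO}$ such that for every $S\in\mathcal{T}$, key $x$ and value $v$ with $S\vdash\mathsf{R}(x,v)$, the $\prec$-greatest transaction $T\prec S$ with $T\in\mathsf{WriteTx}_x$ satisfies $T\vdash\mathsf{W}(x,v)$. Hyper-polygraph of $\mathcal{H}$: $\mathcal{G}=(\mathcal{V},\mathcal{E},(\mathcal{C}^{\mathsf{WW}},\mathcal{C}^{\mathsf{WR}}))$ where $\mathcal{V}=\mathcal{T}$; edges are tuples $(T,S,\mathsf{t},x)$, written $T\xrightarrow{\mathsf{t}(x)}S$, with type $\mathsf{t}\in\{\mathsf{SO},\mathsf{WR},\mathsf{WW},\mathsf{RW}\}$ and key $x$ (irrelevant for $\mathsf{SO}$); the known edge set $\mathcal{E}$ consists of $T\xrightarrow{\mathsf{SO}}S$ for all $(T,S)\in\mathsf{SO}$, and $T\xrightarrow{\mathsf{WR}(x)}S$ whenever $S\vdash\mathsf{R}(x,v)$ and $T$ is the unique transaction with $T\vdash\mathsf{W}(x,v)$; $\mathcal{C}^{\mathsf{WW}}=\{\{T\xrightarrow{\mathsf{WW}(x)}S,\ S\xrightarrow{\mathsf{WW}(x)}T\}\mid x\in\mathsf{Key},\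 T,S\in\mathsf{WriteTx}_x,\ T\neq S\}$; $\mathcal{C}^{\mathsf{WR}}=\{\{T_i\xrightarrow{\mathsf{WR}(x)}S\mid T_i\vdash\mathsf{W}(x,v)\}\mid S\vdash\mathsf{R}(x,v)\}$. A directed labeled graph $\mathcal{G}'=(\mathcal{V}',\mathcal{E}')$ is compatible with $\mathcal{G}$ if $\mathcal{V}'=\mathcal{V}$; $\mathcal{E}'\supseteq\mathcal{E}$; for all keys $x$ and all $T,T',S\in\mathcal{V}$ with $T\neq S$, if $T'\xrightarrow{\mathsf{WR}(x)}T\in\mathcal{E}'$ and $T'\xrightarrow{\mathsf{WW}(x)}S\in\mathcal{E}'$ then $T\xrightarrow{\mathsf{RW}(x)}S\in\mathcal{E}'$; and $|\mathcal{E}'\cap C|=1$ for every $C\in\mathcal{C}^{\mathsf{WW}}\cup\mathcal{C}^{\mathsf{WR}}$. A labeled graph is acyclic if the underlying relation on vertices (ignoring labels and keys) has no directed cycle, including self-loops. *)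

From mathcomp Require Import all_boot.
From Stdlib Require Import Relations.
Set Implicit Arguments. Unset Strict Implicit. Unset Printing Implicit Defensive.

Section Histories.
Variables (Key : finType) (Val : Type) (Tx : finType).

(* Operations: reads R(x,v) and writes W(x,v).  A transaction (O,po) is
   represented by the po-ordered list of its operations; list positions play
   the role of the unique operation identifiers. *)
Inductive op := Rd of Key & Val | Wr of Key & Val.

Definition op_key (o : op) : Key := match o with Rd x _ | Wr x _ => x end.
Definition op_val (o : op) : Val := match o with Rd _ v | Wr _ v => v end.
Definition is_write (o : op) : bool := if o is Wr _ _ then true else false.

Variable ops : Tx -> seq op.
Variable SO : Tx -> Tx -> Prop.
Variable Tbot : Tx.

Definition writes (T : Tx) (x : Key) (v : Val) : Prop :=
  exists p q, ops T = p ++ Wr x v :: q /\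
    all (fun o => ~~ (is_write o && (op_key o == x))) q.

Definition reads (T : Tx) (x : Key) (v : Val) : Prop :=
  exists p q, ops T = p ++ Rd x v :: q /\ all (fun o => op_key o != x) p.

Definition WriteTx (x : Key) (T : Tx) : Prop := exists v, writes T x v.

(* SO is a union of strict total orders on pairwise disjoint subsets of the
   non-initial transactions, plus Tbot preceding every other transaction. *)
Definition is_history : Prop :=
  (forall T, ops T <> [::]) /\
  (forall x, exists v, writes Tbot x v) /\
  exists (R : Tx -> Tx -> Prop) (sess : Tx -> nat),
    (forall T S, R T S -> T <> Tbot /\ S <> Tbot /\ sess T = sess S) /\
    (forall T, ~ R T T) /\
    (forall T S U, R T S -> R S U -> R T U) /\
    (forall T S, T <> Tbot -> S <> Tbot -> sess T = sess S -> T <> S ->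
                 R T S \/ R S T) /\
    (forall T S, SO T S <-> R T S \/ (T = Tbot /\ S <> Tbot)).

Definition Int : Prop :=
  forall T p1 o p2 q x v,
    ops T = p1 ++ o :: p2 ++ Rd x v :: q ->
    op_key o = x -> all (fun o' => op_key o' != x) p2 ->
    op_val o = v.

Definition strict_total (prec : Tx -> Tx -> Prop) : Prop :=
  (forall T, ~ prec T T) /\
  (forall T S U, prec T S -> prec S U -> prec T U) /\
  (forall T S, T <> S -> prec T S \/ prec S T).

Definition Serializable : Prop :=
  Int /\
  exists prec : Tx -> Tx -> Prop,
    strict_total prec /\ (forall T S, SO T S -> prec T S) /\
    forall S x v, reads S x v ->
      exists T, WriteTx x T /\ prec T S /\
        (forall T', WriteTx x T' -> prec T' S -> T' = T \/ prec T' T) /\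
        writes T x v.

Inductive edge :=
  | ESO of Tx & Tx
  | EWR of Key & Tx & Tx
  | EWW of Key & Tx & Tx
  | ERW of Key & Tx & Tx.

Definition src (e : edge) : Tx :=
  match e with ESO a _ | EWR _ a _ | EWW _ a _ | ERW _ a _ => a end.
Definition dst (e : edge) : Tx :=
  match e with ESO _ b | EWR _ _ b | EWW _ _ b | ERW _ _ b => b end.

Definition known_edge (e : edge) : Prop :=
  match e with
  | ESO a b => SO a b
  | EWR x a b => exists v, reads b x v /\ writes a x v /\
                   (forall T', writes T' x v -> T' = a)
  | _ => False
  end.

Definition cWW (x : Key) (T S : Tx) (e : edge) : Prop :=
  e = EWW x T S \/ e = EWW x S T.
Definition cWR (S : Tx) (x : Key) (v : Val) (e : edge) : Prop :=
  exists Ti, writes Ti x v /\ e = EWR x Ti S.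

Definition exactly_one (E' C : edge -> Prop) : Prop :=
  exists! e, E' e /\ C e.

Definition compatible (E' : edge -> Prop) : Prop :=
  (forall e, known_edge e -> E' e) /\
  (forall x T T' S, T <> S -> E' (EWR x T' T) -> E' (EWW x T' S) ->
                    E' (ERW x T S)) /\
  (forall x T S, WriteTx x T -> WriteTx x S -> T <> S -> exactly_one E' (cWW x T S)) /\
  (forall S x v, reads S x v -> exactly_one E' (cWR S x v)).

Definition graph_rel (E' : edge -> Prop) (T S : Tx) : Prop :=
  exists e, E' e /\ src e = T /\ dst e = S.

Definition acyclic (E' : edge -> Prop) : Prop :=
  forall T, ~ clos_trans Tx (graph_rel E') T T.

End Histories.

From mathcomp Require Import all_boot boolp zify.
From Stdlib Require Import Relations.

(* A serialization order orients every WW pair and lets each read read from the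
   last preceding writer; the RW edges these force also point forward, so the
   resulting compatible graph embeds in the order and is acyclic.  Conversely,
   any linear extension of an acyclic compatible graph is a serialization: a
   writer T' of x strictly between a read S and the writer T it reads from
   would, through the WW edge T -> T', force an RW edge S -> T'.  Linear
   extensions exist on finite types (sort by number of ancestors, break ties by
   rank). *)

Set Implicit Arguments. Unset Strict Implicit. Unset Printing Implicit Defensive.

Lemma forward_acyclic (T : Type) (r lt : relation T) :
    (forall a, ~ lt a a) -> transitive T lt -> inclusion T r lt ->
  forall a, ~ clos_trans T r a a.
Proof.
move=> lt_irr lt_trans r_lt.
suff ct_lt : inclusion T (clos_trans T r) lt by move=> a /ct_lt; apply: lt_irr.
move=> a b; elim=> [c d /r_lt // | c d e _ lt_cd _ lt_de]; exact: lt_trans lt_cd lt_de.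
Qed.

Section LinearExtension.
Variables (T : finType) (r : relation T).
Hypothesis r_acyclic : forall a, ~ clos_trans T r a a.

Definition ancestors (a : T) : {set T} := [set b | `[< clos_trans T r b a >]].

Lemma ancestors_proper a b : r a b -> ancestors a \proper ancestors b.
Proof.
move=> rab; apply/properP; split.
  apply/subsetP => c; rewrite !inE => /asboolP cta; apply/asboolP.
  exact: t_trans cta (t_step _ _ _ _ rab).
exists a; rewrite inE; apply/asboolP; first exact: t_step.
exact: r_acyclic.
Qed.

Definition topo_lt (a b : T) : Prop :=
  #|ancestors a| < #|ancestors b| \/
  #|ancestors a| = #|ancestors b| /\ enum_rank a < enum_rank b.

Lemma topo_lt_strict_total : strict_total topo_lt.
Proof.
rewrite /topo_lt; split; first by move=> a; lia.
split; first by move=> a b c; lia.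
move=> a b neq_ab; have : enum_rank a <> enum_rank b :> nat.
  by move/val_inj/enum_rank_inj.
lia.
Qed.

Lemma topo_lt_extends : inclusion T r topo_lt.
Proof. by move=> a b /ancestors_proper/proper_card; left. Qed.

End LinearExtension.

Lemma acyclic_linear_extension (T : finType) (r : relation T) :
    (forall a, ~ clos_trans T r a a) ->
  exists lt : relation T, strict_total lt /\ inclusion T r lt.
Proof.
move=> r_acyclic; exists (topo_lt r).
by split; [exact: topo_lt_strict_total | exact: topo_lt_extends].
Qed.

Section Serialization.
Variables (Key : finType) (Val : Type) (Tx : finType).
Variables (ops : Tx -> seq (op Key Val)) (SO : relation Tx).

Definition last_writer (prec : relation Tx) (x : Key) (T S : Tx) : Prop :=
  [/\ WriteTx ops x T, prec T S &
      forall T', WriteTx ops x T' -> prec T' S -> T' = T \/ prec T' T].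

Definition reads_from_last_writer (prec : relation Tx) : Prop :=
  forall S x v, reads ops S x v -> exists2 T, last_writer prec x T S & writes ops T x v.

Definition serializes (prec : relation Tx) : Prop :=
  [/\ strict_total prec, inclusion Tx SO prec & reads_from_last_writer prec].

Lemma SerializableP : Serializable ops SO <-> Int ops /\ exists prec, serializes prec.
Proof.
split=> [[int_ops [prec [total [SO_prec read_ok]]]] | [int_ops [prec [total SO_prec read_ok]]]];
  split=> //; exists prec.
  split=> // S x v /read_ok [T [WT [TS [maxT wT]]]].
  by exists T.
do 2 split=> //.
by move=> S x v /read_ok [T [WT TS maxT] wT]; exists T.
Qed.

Lemma cWWC (x : Key) (T S : Tx) : cWW x T S = cWW x S T.
Proof. by apply/funext => e; apply/propext; rewrite /cWW or_comm. Qed.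

Section StrictTotalOrder.
Variable prec : relation Tx.
Hypothesis prec_total : strict_total prec.

Let prec_irr : forall T, ~ prec T T := prec_total.1.
Let prec_trans : forall T S U, prec T S -> prec S U -> prec T U := prec_total.2.1.

Lemma last_writer_uniq x T T' S :
  last_writer prec x T S -> last_writer prec x T' S -> T = T'.
Proof.
move=> [WT TS maxT] [WT' T'S maxT'].
case: (maxT' T WT TS) => // T_T'; case: (maxT T' WT' T'S) => // T'_T.
by case: (prec_irr (prec_trans T_T' T'_T)).
Qed.

Lemma last_writer_antidep x T S U :
  last_writer prec x T S -> WriteTx ops x U -> prec T U -> S <> U -> prec S U.
Proof.
move=> [_ TS maxT] WU TU neq_SU; case: (prec_total.2.2 S U neq_SU) => // US.
case: (maxT U WU US) => [eq_UT | UT]; first by subst U; case: (prec_irr TU).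
by case: (prec_irr (prec_trans TU UT)).
Qed.

Definition serialization_graph (e : edge Key Tx) : Prop :=
  match e with
  | ESO a b => SO a b
  | EWR x a b => last_writer prec x a b
  | EWW x a b => [/\ WriteTx ops x a, WriteTx ops x b & prec a b]
  (* the RW edges forced by the WR and WW edges *)
  | ERW x a b => a <> b /\ exists2 T, last_writer prec x T a & WriteTx ops x b /\ prec T b
  end.

Lemma serialization_graph_forward :
  inclusion Tx SO prec -> forall e, serialization_graph e -> prec (src e) (dst e).
Proof.
move=> SO_prec [a b | x a b | x a b | x a b] /=; [exact: SO_prec | by case | by case |].
by move=> [neq_ab [T lastT [Wb Tb]]]; apply: last_writer_antidep lastT Wb Tb neq_ab.
Qed.

Lemma serialization_graph_compatible :
  reads_from_last_writer prec -> compatible ops SO serialization_graph.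
Proof.
move=> read_ok; split.
  move=> [a b | x a b | x a b | x a b] //= [v [rd [wa wa_uniq]]].
  by have [T lastT /wa_uniq <-] := read_ok _ _ _ rd.
split.
  by move=> x T T' S neq_TS lastT' [_ WS T'S]; split=> //; exists T'.
split.
  move=> x T S WT WS neq_TS.
  wlog TS : T S WT WS neq_TS / prec T S => [wlog_TS | ].
    case: (prec_total.2.2 T S neq_TS) => [TS | ST]; first exact: wlog_TS.
    by rewrite cWWC; apply: wlog_TS ST => //; apply: nesym.
  exists (EWW x T S); split=> [| e [ge [-> // | ee]]]; first by split=> //; left.
  by subst e; case: ge => _ _ ST; case: (prec_irr (prec_trans TS ST)).
move=> S x v /read_ok [T lastT wT]; exists (EWR x T S).
split=> [| e [ge [T' [wT' ee]]]]; first by split=> //; exists T.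
by subst e; rewrite (last_writer_uniq lastT ge).
Qed.

Lemma forward_compatible_serializes (E' : edge Key Tx -> Prop) :
    compatible ops SO E' -> (forall e, E' e -> prec (src e) (dst e)) ->
  serializes prec.
Proof.
move=> [known [rw_closed [ww_choice wr_choice]]] forward.
split=> // [a b SOab | S x v rd]; first exact: forward (ESO Key a b) (known (ESO Key a b) SOab).
have [e [[ge [T [wT ee]]] _]] := wr_choice S x v rd; subst e.
exists T => //; split; [by exists v | exact: forward _ ge | move=> T' WT' T'S].
have WT : WriteTx ops x T by exists v.
case: (eqVneq T' T) => [-> | /eqP neq_T'T]; first by left.
have [e [[gTT' [ee | ee]] _]] := ww_choice x T T' WT WT' (nesym neq_T'T); subst e.
- have neq_ST' : S <> T' by move=> eq_ST'; subst T'; case: (prec_irr T'S).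
  have /= ST' := forward _ (rw_closed x S T T' neq_ST' ge gTT').
  by case: (prec_irr (prec_trans ST' T'S)).
- by right; apply: forward _ gTT'.
Qed.

End StrictTotalOrder.

Lemma serializable_acyclic_compatible :
  Serializable ops SO -> exists E' : edge Key Tx -> Prop, compatible ops SO E' /\ acyclic E'.
Proof.
move=> /SerializableP [_ [prec [total SO_prec read_ok]]].
exists (serialization_graph prec); split; first exact: serialization_graph_compatible.
apply: (forward_acyclic total.1 total.2.1) => a b [e [ge [<- <-]]].
exact: serialization_graph_forward.
Qed.

Lemma acyclic_compatible_serializable (E' : edge Key Tx -> Prop) :
  Int ops -> compatible ops SO E' -> acyclic E' -> Serializable ops SO.
Proof.
move=> int_ops compat /acyclic_linear_extension [prec [total E'_prec]].
apply/SerializableP; split=> //; exists prec.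
apply: forward_compatible_serializes compat _ => // e ge.
by apply: E'_prec; exists e.
Qed.

End Serialization.

Theorem theorem3p5 (Key : finType) (Val : Type) (Tx : finType)
    (ops : Tx -> seq (op Key Val)) (SO : Tx -> Tx -> Prop) (Tbot : Tx) :
  is_history ops SO Tbot ->
  (Serializable ops SO <->
   Int ops /\ exists E' : edge Key Tx -> Prop,
                compatible ops SO E' /\ acyclic E').
Proof.
move=> _; split=> [ser | [int_ops [E' [compat acyc]]]].
  by split; [case: ser | exact: serializable_acyclic_compatible].
exact: acyclic_compatible_serializable compat acyc.
Qed.
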